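(* Let $(\vec X_1,Y_1),\ldots,(\vec X_n,Y_n)$ be i.i.d. with $\vec X\in\mathcal X$, $Y\in\mathbb R$, and let $F(y\mid\vec x)$ be the conditional distribution function of $Y$ given $\vec X=\vec x$. For each $n$ let $\widehat F$ be an estimate of $F$ independent of $(\vec X_i,Y_i)_{i\le n}$, and suppose there exist sequences $\eta_n=o(1)$ and $\rho_n=o(1)$ such that $\mathbb P\Big(\mathbb E\big[\sup_{y\in\mathbb R}(\widehat F(y\mid\vec X)-F(y\mid\vec X))^2\,\big|\,\widehat F\big]\ge\eta_n\Big)\le\rho_n$, where $(\vec X,Y)$ is an independent copy. Let $I_1=\{i\le n: |\widehat F(Y_i\mid\vec X_i)-F(Y_i\mid\vec X_i)|<\eta_n^{1/3}\}$ and $I_2=\{1,\ldots,n\}\setminus I_1$. Then $|I_2|=o_{\mathbb P}(n)$ and $|I_1|=n+o_{\mathbb P}(n)$. *)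

From HB Require Import structures.
From mathcomp Require Import all_boot all_order all_algebra.
From mathcomp Require Import all_classical all_reals all_analysis.
From mathcomp Require Import measurable_realfun.
Set Implicit Arguments. Unset Strict Implicit. Unset Printing Implicit Defensive.
Import Order.TTheory GRing.Theory Num.Theory.
Local Open Scope classical_set_scope.
Local Open Scope ring_scope.

Section Defs.
Context {d dU : measure_display} {Omega : measurableType d} {R : realType}
  {U : measurableType dU}.

Definition iid_seq (P : probability Omega R) (V : nat -> Omega -> U) : Prop :=
  (forall i, measurable_fun setT (V i)) /\
  (forall i (B : set U), measurable B -> P (V i @^-1` B) = P (V 0%N @^-1` B)) /\
  (forall (n : nat) (B : nat -> set U), (forall i, measurable (B i)) ->
     P (\bigcap_(i < n) (V i @^-1` B i)) =
     (\prod_(i < n) fine (P (V i @^-1` B i)))%:E).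

Definition indep_prefix {dT} {T : measurableType dT} (P : probability Omega R)
  (Z : Omega -> T) (V : nat -> Omega -> U) (n : nat) : Prop :=
  forall (A : set T) (B : nat -> set U), measurable A ->
    (forall i, measurable (B i)) ->
    P (Z @^-1` A `&` \bigcap_(i < n) (V i @^-1` B i)) =
    (fine (P (Z @^-1` A)) * fine (P (\bigcap_(i < n) (V i @^-1` B i))))%:E.
End Defs.

(* F is (a version of) the conditional distribution function of Y given X:
   P(X in A, Y <= y) = E[1_{X in A} F(y | X)] *)
Definition cond_cdf {d dX} {Omega : measurableType d} {R : realType}
  {Xs : measurableType dX} (P : probability Omega R)
  (X : Omega -> Xs) (Y : Omega -> R) (F : R -> Xs -> R) : Prop :=
  forall (y : R) (A : set Xs), measurable A ->
    P (X @^-1` A `&` [set w | Y w <= y]) =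
    (\int[P]_(w in X @^-1` A) (F y (X w))%:E)%E.

Definition sup_sqdiff {Xs : Type} {R : realType} (G F : R -> Xs -> R) (x : Xs)
  : \bar R :=
  ereal_sup (range (fun y : R => ((G y x - F y x) ^+ 2)%:E)).

From HB Require Import structures.
From mathcomp Require Import all_boot all_order all_algebra.
From mathcomp Require Import all_classical all_reals all_analysis.
From mathcomp Require Import measurable_realfun.
Import Order.TTheory GRing.Theory Num.Theory.
Local Open Scope classical_set_scope.
Local Open Scope ring_scope.

(* Since the estimate Z_n is independent of the
   i-th observation, conditioning on Z_n = z gives the bound
   P(|Ghat - F|(Y_i | X_i) >= eta^(1/3)) <= P(g(Z_n) >= eta)
     + sup_{z : g z < eta} P(sup_y (Ghat_z - F)^2(y | X_i) >= eta^(2/3)),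
   where g z = E[sup_y (Ghat_z - F)^2(y | X)].  The first term is at most
   rho_n and, by Markov's inequality, the second is at most
   eta / eta^(2/3) = eta^(1/3).  So E|I_2| <= n (eta_n^(1/3) + rho_n), and
   Markov's inequality again gives P(|I_2| > e n) <= (eta_n^(1/3) + rho_n) / e,
   which tends to 0; finally | |I_1| - n | = |I_2|. *)

Definition mfun_pack {d d'} {T : measurableType d} {T' : measurableType d'}
    {f : T -> T'} (mf : measurable_fun setT f) : {mfun T >-> T'} :=
  HB.pack f (isMeasurableFun.Build _ _ _ _ f mf).

Lemma measurable_ge {d} {T : measurableType d} {R : realType}
    (f : T -> R) (c : R) :
  measurable_fun setT f -> measurable [set x | c <= f x].
Proof.
by move=> mf; rewrite -preimage_itvcy -[X in measurable X]setTI; apply: mf.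
Qed.

Lemma ge0_markov {d} {T : measurableType d} {R : realType}
    (mu : {measure set T -> \bar R}) (g : T -> \bar R) (a : R) :
  measurable_fun setT g -> (forall x, 0 <= g x)%E -> 0 < a ->
  (mu [set x | a%:E <= g x] <= a^-1%:E * \int[mu]_x g x)%E.
Proof.
move=> mg g0 a0; rewrite lee_pdivlMl //.
have := @le_integral_comp_abse _ _ _ mu setT measurableT g a id
  (@measurable_id _ _ setT) (fun _ h => h) (fun _ _ _ _ h => h) mg a0.
rewrite setTI (eq_integral g) => [|x _]; last by rewrite gee0_abs.
rewrite (_ : [set x | _] = [set x | a%:E <= g x])%E //.
by apply/funext => x /=; rewrite gee0_abs.
Qed.

Lemma measure_card_gt_le {d} {T : measurableType d} {R : realType}
    (mu : {measure set T -> \bar R}) (n : nat) (A : 'I_n -> set T) (b e : R) :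
  (forall i, measurable (A i)) -> (forall i, mu (A i) <= b%:E)%E ->
  0 < e -> (0 < n)%N ->
  (mu [set x | (e * n%:R < #|[set i | x \in A i]%SET|%:R)%R] <= (b / e)%:E)%E.
Proof.
move=> mA Ab e0 n0.
pose N x := (\sum_(i < n) (\1_(A i) x : R)%:E)%E.
have N0 x : (0 <= N x)%E by apply: sume_ge0 => i _; rewrite lee_fin.
have mN : measurable_fun setT N.
  by apply: emeasurable_sum => i; apply/measurable_EFinP; exact: measurable_indic.
have cardE x : (#|[set i | x \in A i]%SET|%:R)%:E = N x.
  rewrite /N sumEFin -sum1_card natr_sum big_mkcond /=; congr (_%:E).
  by apply: eq_bigr => i _; rewrite inE indicE; case: (x \in A i).
have en0 : 0 < e * n%:R by rewrite mulr_gt0 // ltr0n.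
have -> : [set x | (e * n%:R < #|[set i | x \in A i]%SET|%:R)%R] =
    [set x | ((e * n%:R)%:E < N x)%E].
  by apply/funext => x; rewrite /= -cardE lte_fin.
apply: (@le_trans _ _ (mu [set x | ((e * n%:R)%:E <= N x)%E])).
  apply: le_measure; rewrite ?inE.
  - by rewrite -[X in measurable X]setTI; apply: emeasurable_fun_o_infty.
  - by rewrite -[X in measurable X]setTI; apply: emeasurable_fun_c_infty.
  by move=> x /= /ltW.
apply: le_trans (ge0_markov mu _ _ mN N0 en0) _.
rewrite ge0_integral_sum //; last first.
  by move=> i; apply/measurable_EFinP; exact: measurable_indic.
rewrite (eq_bigr (fun i => mu (A i))) => [|i _]; last first.
  by rewrite integral_indic // setIT.
apply: (@le_trans _ _ ((e * n%:R)^-1%:E * (n%:R * b)%:E)%E).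
  apply: lee_wpmul2l; first by rewrite lee_fin invr_ge0 ltW.
  apply: (@le_trans _ _ (\sum_(i < n) b%:E)%E); first exact: lee_sum.
  by rewrite sumEFin sumr_const card_ord mulr_natl.
by rewrite -EFinM lee_fin invfM -mulrA mulKf ?pnatr_eq0 -?lt0n // mulrC.
Qed.

Section independent_pair.
Local Open Scope ereal_scope.
Context {d dT dU : measure_display} {Omega : measurableType d} {R : realType}
  (P : probability Omega R) {T : measurableType dT} {U : measurableType dU}.

Definition independent (Zf : Omega -> T) (W : Omega -> U) :=
  forall A B, measurable A -> measurable B ->
  P (Zf @^-1` A `&` W @^-1` B) = P (Zf @^-1` A) * P (W @^-1` B).

Context {Zf : Omega -> T} {W : Omega -> U}.
Hypotheses (mZ : measurable_fun setT Zf) (mW : measurable_fun setT W)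
  (ZW : independent Zf W).

Let PZ := distribution P (mfun_pack mZ).
Let PW := distribution P (mfun_pack mW).

Lemma independent_preimage_pairE (S : set (T * U)) : measurable S ->
  P ((fun w => (Zf w, W w)) @^-1` S) = \int[PZ]_z P (W @^-1` xsection S z).
Proof.
move=> mS; pose PZW := distribution P (mfun_pack (measurable_fun_pair mZ mW)).
exact: esym (product_measure_unique (m1 := PZ) (m2 := PW) (m' := PZW) ZW mS).
Qed.

Lemma independent_preimage_pair_le (S : set (T * U)) (bad : set T) (c : R) :
  measurable S -> measurable bad -> (0 <= c)%R ->
  (forall z, ~ bad z -> P (W @^-1` xsection S z) <= c%:E) ->
  P ((fun w => (Zf w, W w)) @^-1` S) <= c%:E + P (Zf @^-1` bad).
Proof.
move=> mS mbad c0 Sc; rewrite independent_preimage_pairE //.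
have mbad1 : measurable_fun setT (fun z => (\1_bad z : R)%:E).
  by apply/measurable_EFinP; exact: measurable_indic.
have -> : c%:E + P (Zf @^-1` bad) = \int[PZ]_z (c%:E + (\1_bad z : R)%:E).
  have c0E z : setT z -> 0 <= c%:E by rewrite lee_fin.
  have bad0 z : setT z -> 0 <= (\1_bad z : R)%:E by rewrite lee_fin.
  rewrite ge0_integralD //.
  have PZT : PZ setT = 1.
    rewrite /PZ /= /distribution /pushforward /=.
    by rewrite preimage_setT probability_setT.
  rewrite integral_cst // integral_indic // setIT; congr (_ + _).
  by rewrite -[LHS]mule1; congr (_ * _); exact/esym/PZT.
apply: ge0_le_integral => //.
- exact: (measurable_fun_xsection PW mS).
- by apply: emeasurable_funD => //; exact: measurable_cst.
move=> z _; rewrite indicE; have [bz|nbz] := pselect (bad z).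
  rewrite mem_set // (le_trans (probability_le1 P _)) ?lee_fin ?lerDr //.
  rewrite -[X in measurable X]setTI; apply: mW => //.
  exact: measurable_xsection z mS.
by rewrite memNset // adde0; exact: Sc.
Qed.

Lemma independent_markov {W0 : Omega -> U} {S : T * U -> \bar R} {a eta : R} :
  measurable_fun setT W0 ->
  (forall B, measurable B -> P (W @^-1` B) = P (W0 @^-1` B)) ->
  measurable_fun setT S -> (forall p, 0 <= S p) -> (0 < a)%R -> (0 < eta)%R ->
  P [set w | a%:E <= S (Zf w, W w)] <=
  (eta / a)%:E + P [set w | eta%:E <= \int[P]_v S (Zf w, W0 v)].
Proof.
move=> mW0 WW0 mS S0 a0 eta0.
have mSW0 : measurable_fun setT (fun p : T * Omega => S (p.1, W0 p.2)).
  apply: measurableT_comp mS _; apply: measurable_fun_pair => //.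
  exact: measurableT_comp mW0 _.
have mg := measurable_fun_fubini_tonelli_F (m2 := P) _ mSW0 (fun p => S0 _).
have mSz z : measurable_fun setT (fun v => S (z, W0 v)).
  by apply: measurableT_comp mS _; exact: measurable_fun_pair.
apply: (independent_preimage_pair_le [set p | a%:E <= S p]
  [set z | eta%:E <= \int[P]_v S (z, W0 v)] (eta / a)).
- by rewrite -[X in measurable X]setTI; exact: emeasurable_fun_c_infty.
- by rewrite -[X in measurable X]setTI; exact: emeasurable_fun_c_infty.
- by rewrite divr_ge0 ?ltW.
move=> z /negP; rewrite -ltNge => gz.
rewrite xsectionE WW0; last first.
  rewrite -[X in measurable X]setTI; apply: emeasurable_fun_c_infty => //.
  by apply: measurableT_comp mS _; exact: measurable_fun_pair.
apply: le_trans (ge0_markov P _ _ (mSz z) (fun v => S0 _) a0) _.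
rewrite mulrC EFinM; apply: lee_wpmul2l; first by rewrite lee_fin invr_ge0 ltW.
exact: ltW.
Qed.

End independent_pair.

Lemma indep_prefix_independent {d dT dU} {Omega : measurableType d} {R : realType}
    {T : measurableType dT} {U : measurableType dU} (P : probability Omega R)
    {Zf : Omega -> T} {V : nat -> Omega -> U} {n : nat} (i : 'I_n) :
  measurable_fun setT Zf -> measurable_fun setT (V i) ->
  indep_prefix P Zf V n -> independent P Zf (V i).
Proof.
move=> mZ mVi ZV A B mA mB.
pose Bi j := if j == val i then B else setT.
have VBi : \bigcap_(j < n) (V j @^-1` Bi j) = V i @^-1` B.
  apply/seteqP; split => [w /(_ i (ltn_ord i))|w Bw j _]; rewrite /Bi.
    by rewrite eqxx.
  by case: eqP => [->|].
rewrite -VBi ZV // => [|j]; last by rewrite /Bi; case: eqP.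
rewrite VBi EFinM !fineK ?fin_num_measure //.
- by rewrite -[X in measurable X]setTI; exact: mVi.
- by rewrite -[X in measurable X]setTI; exact: mZ.
Qed.

Lemma sup_sqdiff_ge0 {Xs : Type} {R : realType} (G F : R -> Xs -> R) (x : Xs) :
  (0 <= sup_sqdiff G F x)%E.
Proof.
apply: le_trans (ereal_sup_ubound _); last by exists 0.
by rewrite lee_fin sqr_ge0.
Qed.

Lemma cvg_at_right0 {T : Type} {F : set_system T} {FF : Filter F}
    {R : realType} {f : T -> R} :
  f @ F --> 0 -> (\forall t \near F, 0 < f t) -> f @ F --> 0^'+.
Proof. by move=> f0 fpos A /f0; apply: filterS2 fpos => t ft0 /(_ ft0). Qed.

Lemma card_setC_dist (n : nat) (A : {set 'I_n}) {R : numDomainType} :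
  `|#|A|%:R - n%:R| = #|~: A|%:R :> R.
Proof.
rewrite -[in n%:R](card_ord n) -(cardsC A) natrD opprD addrA subrr sub0r.
by rewrite normrN normr_nat.
Qed.

Lemma threshold_near_gt0 {d} {Omega : measurableType d} {R : realType}
    (P : probability Omega R) {g : nat -> Omega -> \bar R} {eta rho : nat -> R} :
  rho @ \oo --> 0 -> (forall n w, (0 <= g n w)%E) ->
  (forall n, (P [set w | (eta n)%:E <= g n w] <= (rho n)%:E)%E) ->
  \forall n \near \oo, 0 < eta n.
Proof.
move=> rho0 g0 hyp; near=> n; rewrite ltNge; apply/negP => eta_le0.
have := hyp n; rewrite (_ : [set w | _] = setT); last first.
  by apply/seteqP; split => // w _; apply: (le_trans _ (g0 n w)); rewrite lee_fin.
rewrite probability_setT lee_fin leNgt => /negP; apply.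
by near: n; exact: (cvgr_lt _ rho0 _ ltr01).
Unshelve. all: end_near.
Qed.

Section cdf_deviation.
Local Open Scope ereal_scope.
Context {d dX dT : measure_display} {Omega : measurableType d} {R : realType}
  (P : probability Omega R) {Xs : measurableType dX} {T : measurableType dT}
  {X : nat -> Omega -> Xs} {Y : nat -> Omega -> R} {F : R -> Xs -> R}
  {Zf : Omega -> T} {G : T -> R -> Xs -> R}.
Hypotheses (mXY : forall i, measurable_fun setT (fun w => (X i w, Y i w)))
  (XY_law : forall i B, measurable B ->
     P ((fun w => (X i w, Y i w)) @^-1` B) =
     P ((fun w => (X 0%N w, Y 0%N w)) @^-1` B))
  (mF : measurable_fun setT (fun p : R * Xs => F p.1 p.2))
  (mZ : measurable_fun setT Zf)
  (mG : measurable_fun setT (fun p : T * (R * Xs) => G p.1 p.2.1 p.2.2))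
  (mSup : measurable_fun setT (fun p : T * Xs => sup_sqdiff (G p.1) F p.2)).

Let dev (p : T * (Xs * R)) := `|G p.1 p.2.2 p.2.1 - F p.2.2 p.2.1|%R.

Let measurable_dev : measurable_fun setT dev.
Proof.
have mswap : measurable_fun setT (fun p : T * (Xs * R) => (p.1, (p.2.2, p.2.1))).
  apply: measurable_fun_pair => //; apply: measurable_fun_pair.
    exact: measurableT_comp measurable_snd measurable_snd.
  exact: measurableT_comp measurable_fst measurable_snd.
apply: measurableT_comp (@normr_measurable R setT) _; apply: measurable_funB.
  exact: measurableT_comp mG mswap.
exact: measurableT_comp mF (measurableT_comp measurable_snd mswap).
Qed.

Lemma measurable_cdf_dev_ge (i : nat) (c : R) :
  measurable [set w | (c <= `|G (Zf w) (Y i w) (X i w) - F (Y i w) (X i w)|)%R].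
Proof.
apply: (measurable_ge (dev \o fun w => (Zf w, (X i w, Y i w)))).
by apply: measurableT_comp measurable_dev _; exact: measurable_fun_pair.
Qed.

Lemma cdf_dev_ge_prob_le (i : nat) (eta : R) : (0 < eta)%R ->
  independent P Zf (fun w => (X i w, Y i w)) ->
  P [set w | (powR eta 3^-1 <= `|G (Zf w) (Y i w) (X i w) - F (Y i w) (X i w)|)%R]
  <= (powR eta 3^-1)%:E +
     P [set w | eta%:E <= \int[P]_v sup_sqdiff (G (Zf w)) F (X 0%N v)].
Proof.
move=> eta0 ZV; set c := powR eta 3^-1.
have c0 : (0 < c)%R by exact: powR_gt0.
have eta_c : (eta / c ^+ 2 = c)%R.
  have c3 : (c ^+ 3 = eta)%R.
    by rewrite -powR_mulrn ?powR_ge0 // -powRrM mulVf ?powRr1 // ltW.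
  by rewrite -{1}c3 exprSr mulrAC divff ?mul1r // expf_neq0 // gt_eqF.
pose S (p : T * (Xs * R)) := sup_sqdiff (G p.1) F p.2.1.
have mS : measurable_fun setT S.
  exact: measurableT_comp mSup (measurable_fun_pair measurable_fst
    (measurableT_comp measurable_fst measurable_snd)).
apply: (@le_trans _ _ (P [set w | (c ^+ 2)%:E <= S (Zf w, (X i w, Y i w))])).
  apply: le_measure; rewrite ?inE; first exact: measurable_cdf_dev_ge.
    rewrite -[X in measurable X]setTI; apply: emeasurable_fun_c_infty => //.
    exact: measurableT_comp mS (measurable_fun_pair mZ (mXY i)).
  move=> w /= cdev; apply: le_trans (ereal_sup_ubound _); last by exists (Y i w).
  rewrite lee_fin -[X in (_ <= X)%R]real_normK ?num_real //.
  by rewrite ler_sqr ?nnegrE ?(ltW c0).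
apply: le_trans (independent_markov P mZ (mXY i) ZV (mXY 0%N) (XY_law i) mS
  (fun p => sup_sqdiff_ge0 _ _ _) (exprn_gt0 2 c0) eta0) _.
by rewrite eta_c.
Qed.

Lemma card_cdf_dev_ge_prob_le (n : nat) (eta rho e : R) :
  (0 < eta)%R -> (0 < e)%R -> (0 < n)%N ->
  (forall i : 'I_n, independent P Zf (fun w => (X i w, Y i w))) ->
  P [set w | eta%:E <= \int[P]_v sup_sqdiff (G (Zf w)) F (X 0%N v)] <= rho%:E ->
  P [set w | (e * n%:R < #|~: [set i : 'I_n |
     `|G (Zf w) (Y i w) (X i w) - F (Y i w) (X i w)| < powR eta 3^-1]%SET|%:R)%R]
  <= ((powR eta 3^-1 + rho) / e)%:E.
Proof.
move=> eta0 e0 n0 ZV bad_le.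
pose A (i : 'I_n) := [set w |
  (powR eta 3^-1 <= `|G (Zf w) (Y i w) (X i w) - F (Y i w) (X i w)|)%R].
rewrite (_ : [set w | _] =
    [set w | (e * n%:R < #|[set i | w \in A i]%SET|%:R)%R]); last first.
  apply/funext => w; congr (_ < _%:R)%R; apply: eq_card => i.
  rewrite !inE /= -leNgt.
  by apply/idP/idP => h; [exact: mem_set | exact: set_mem].
apply: measure_card_gt_le => // i; first exact: measurable_cdf_dev_ge.
rewrite EFinD; apply: (le_trans _ (leeD2l _ bad_le)).
exact: cdf_dev_ge_prob_le.
Qed.

End cdf_deviation.

Theorem lemma1 {d dX dT : measure_display} (Omega : measurableType d)
  (R : realType) (P : probability Omega R)
  (Xs : measurableType dX) (T : measurableType dT)
  (X : nat -> Omega -> Xs) (Y : nat -> Omega -> R) (F : R -> Xs -> R)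
  (Z : nat -> Omega -> T) (Ghat : nat -> T -> R -> Xs -> R)
  (eta rho : nat -> R) :
  iid_seq P (fun i w => (X i w, Y i w)) ->
  cond_cdf P (X 0%N) (Y 0%N) F ->
  measurable_fun setT (fun p : R * Xs => F p.1 p.2) ->
  (forall n, measurable_fun setT (Z n)) ->
  (forall n, indep_prefix P (Z n) (fun i w => (X i w, Y i w)) n) ->
  (forall n, measurable_fun setT
     (fun p : T * (R * Xs) => Ghat n p.1 p.2.1 p.2.2)) ->
  (forall n, measurable_fun setT
     (fun p : T * Xs => (sup_sqdiff (Ghat n p.1) F p.2 : \bar R))) ->
  eta @ \oo --> 0 ->
  rho @ \oo --> 0 ->
  (forall n, P [set w | ((eta n)%:E <=
       \int[P]_v sup_sqdiff (Ghat n (Z n w)) F (X 0%N v))%E]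
     <= (rho n)%:E)%E ->
  let I1 n w := [set i : 'I_n |
     `|Ghat n (Z n w) (Y i w) (X i w) - F (Y i w) (X i w)|
       < powR (eta n) (3^-1)]%SET in
  let I2 n w := (~: I1 n w)%SET in
  (forall e : R, 0 < e ->
     (fun n => P [set w | e * n%:R < (#|I2 n w|)%:R]) @ \oo --> 0%E) /\
  (forall e : R, 0 < e ->
     (fun n => P [set w | e * n%:R < `|(#|I1 n w|)%:R - n%:R|]) @ \oo --> 0%E).
Proof.
move=> [mXY [XY_law _]] _ mF mZ Z_indep mG mSup eta0 rho0 hyp I1 I2.
(* [powR x 3^-1] is [1], not a cube root, when [x < 0]. *)
have eta_gt0 : \forall n \near \oo, 0 < eta n.
  apply: (threshold_near_gt0 P rho0 _ hyp) => n w.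
  by apply: integral_ge0 => v _; exact: sup_sqdiff_ge0.
have c_cvg : (fun n => powR (eta n) 3^-1) @ \oo --> 0.
  apply: (cvg_comp _ _ (cvg_at_right0 eta0 eta_gt0) (powR_cvg0 _)).
  by rewrite invr_gt0.
have I2_small (e : R) : 0 < e ->
    (fun n => P [set w | e * n%:R < (#|I2 n w|)%:R]) @ \oo --> 0%E.
  move=> e0; apply: (@squeeze_cvge _ _ _ _ (fun=> 0%E) _
    (fun n => ((powR (eta n) 3^-1 + rho n) / e)%:E)).
  - near=> n; rewrite measure_ge0 /=.
    apply: (card_cdf_dev_ge_prob_le P mXY XY_law mF (mZ n) (mG n) (mSup n)) => //.
    + by near: n; exact: eta_gt0.
    + by near: n; exact: nbhs_infty_gt.
    + move=> i.
      exact: (indep_prefix_independent P i (mZ n) (mXY i) (Z_indep n)).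
  - exact: cvg_cst.
  apply: cvg_EFin; first by near=> n.
  by have := cvgMr_tmp (b := e^-1) (cvgD c_cvg rho0); rewrite add0r mul0r; apply.
split=> // e e0.
rewrite (_ : (fun n => _) = (fun n => P [set w | e * n%:R < (#|I2 n w|)%:R])).
  exact: I2_small.
by apply/funext => n; congr (P _); apply/funext => w; rewrite /= card_setC_dist.
Unshelve. all: end_near.
Qed.
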